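(* If a topological space $X$ has an $\omega$-deep $\pi$-base, then $X\times\mathbb{Q}$ is $NWD$-separable.
   Context: A $\pi$-base $\mathcal{U}$ is $\omega$-deep if for every decreasing sequence $\{U_n\}_{n<\omega}\subseteq\mathcal{U}$ the set $\bigcap_{n<\omega}U_n$ has nonempty interior. $\mathbb{Q}$ carries its usual topology. A space $Y$ is $NWD$-separable if for every sequence $\{D_n:n<\omega\}$ of dense subsets of $Y$ there are nowhere dense sets $E_n\subseteq D_n$ such that $\bigcup_{n<\omega}E_n$ is dense in $Y$. *)

From mathcomp Require Import all_boot all_order all_algebra.
From mathcomp Require Import all_classical all_reals all_analysis.

Set Implicit Arguments.
Unset Strict Implicit.
Unset Printing Implicit Defensive.

Local Open Scope classical_set_scope.

Definition pi_base (X : topologicalType) (U : set (set X)) : Prop :=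
  (forall V, U V -> open V /\ V !=set0) /\
  (forall W, open W -> W !=set0 -> exists2 V, U V & V `<=` W).

Definition omega_deep_pi_base (X : topologicalType) (U : set (set X)) : Prop :=
  pi_base U /\
  forall Un : nat -> set X,
    (forall n, U (Un n)) -> (forall n, Un n.+1 `<=` Un n) ->
    (\bigcap_n Un n)^° !=set0.

Definition nowhere_dense (Y : topologicalType) (E : set Y) : Prop :=
  (closure E)^° = set0.

Definition NWD_separable (Y : topologicalType) : Prop :=
  forall D : nat -> set Y, (forall n, dense (D n)) ->
  exists E : nat -> set Y,
    (forall n, E n `<=` D n /\ nowhere_dense (E n)) /\
    dense (\bigcup_n E n).

Definition Qtop : topologicalType := order_topology rat.

(* Let D be dense in X x Q and a < b rationals.  For a < s < b let O_s be the
   interior of the closure of the slice {x | (x, s) \in D}.  The O_s are dense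
   in X: otherwise every slice is nowhere dense in some nonempty open V, and
   omega-depth of the pi-base, applied to a decreasing sequence avoiding the
   countably many slices one at a time, yields a nonempty open W in V missing
   all of them, although W x (a, b) meets D.  Enumerating Q and removing from
   each O_s the closure of the earlier ones gives pairwise disjoint open sets
   O'_s whose union is still dense.  The points (x, s) of D with x in O'_s
   form a nowhere dense set, since near such a point no other level s' close
   to s carries points of the set, and this set meets every V x (a, b).
   Running over the countably many rational intervals, the n-th one paired
   with the n-th dense set, yields the required sets E_n. *)

From mathcomp Require Import all_boot all_order all_algebra.
From mathcomp Require Import all_classical all_reals all_analysis.
From mathcomp Require Import lra.
Import Order.TTheory GRing.Theory Num.Theory.

Set Implicit Arguments.
Unset Strict Implicit.
Unset Printing Implicit Defensive.
Local Open Scope classical_set_scope.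
Local Open Scope ring_scope.

Lemma nbhs_prod_box (T V : topologicalType) (p : T * V) (A : set (T * V)) :
  nbhs p A -> exists P Q, [/\ nbhs p.1 P, nbhs p.2 Q & P `*` Q `<=` A].
Proof. by move=> [[P Q] /= [hP hQ] PQA]; exists P, Q. Qed.

Lemma nbhs_setX (T V : topologicalType) (p : T * V) (P : set T) (Q : set V) :
  nbhs p.1 P -> nbhs p.2 Q -> nbhs p (P `*` Q).
Proof. by move=> hP hQ; exists (P, Q). Qed.

Lemma open_setX (T V : topologicalType) (P : set T) (Q : set V) :
  open P -> open Q -> open (P `*` Q).
Proof.
move=> oP oQ; rewrite openE => p [Pp Qp].
by apply: nbhs_setX; apply: open_nbhs_nbhs.
Qed.

Lemma order_nbhs_itv_oo (R : realFieldType) (a b q : R) : a < q < b ->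
  nbhs (q : order_topology R) `]a, b[%classic.
Proof.
move=> abq; apply: open_nbhs_nbhs; split; first exact: itv_open.
by rewrite /= in_itv.
Qed.

Lemma order_nbhs_itvP (R : realFieldType) (q : R) (L : set (order_topology R)) :
  nbhs (q : order_topology R) L ->
  exists a b : R, [/\ a < q, q < b & `]a, b[%classic `<=` L].
Proof.
rewrite itv_nbhsE => -[i [oi qi] iL].
case: i oi qi iL => [[[]l|[]] [[]r|[]]] //= _; rewrite in_itv /=.
- by move=> /andP[lq qr] sub; exists l, r.
- rewrite andbT => lq sub; exists l, (q + 1); split=> [//||y]; first lra.
  by rewrite /= in_itv /= => /andP[ly _]; apply: sub; rewrite /= in_itv /= ly.
- move=> qr sub; exists (q - 1), r; split=> [||y]; [lra | by [] |].
  by rewrite /= in_itv /= => /andP[_ yr]; apply: sub; rewrite /= in_itv /= yr.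
- by move=> _ sub; exists (q - 1), (q + 1); split=> [||y _]; [lra | lra | apply: sub].
Qed.

Section disjointify.
Variables (X : topologicalType) (T : countType) (O : T -> set X).

Definition disjointify (s : T) : set X :=
  O s `\` closure (\bigcup_(t in [set t | (pickle t < pickle s)%N]) O t).

Lemma disjointify_sub s : disjointify s `<=` O s.
Proof. by move=> x []. Qed.

Lemma disjointify_disj s t x : disjointify s x -> disjointify t x -> s = t.
Proof.
move=> [Osx nCs] [Otx nCt].
have [lt|lt|st] := ltngtP (pickle s) (pickle t).
- by case: nCt; apply: subset_closure; exists s.
- by case: nCs; apply: subset_closure; exists t.
- by have := pcan_inj (@pickleK T) st.
Qed.

Hypothesis O_open : forall s, open (O s).

Lemma open_disjointify s : open (disjointify s).
Proof. by apply: openI; [exact: O_open | exact/closed_openC/closed_closure]. Qed.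

(* Among the pieces met by [V], the one of least index meets [V] outside the
   closure of the earlier ones. *)
Lemma disjointify_meets (V : set X) s : open V -> V `&` O s !=set0 ->
  exists t, V `&` disjointify t !=set0.
Proof.
move=> oV [x [Vx Osx]]; have [n ps] : exists n, pickle s = n by exists (pickle s).
elim/ltn_ind: n s x Vx Osx ps => n IH s x Vx Osx ps.
have [[t [y [lt [Vy Oty]]]]|none_earlier] :=
  pselect (exists t y, (pickle t < pickle s)%N /\ V y /\ O t y).
  by apply: (IH _ _ t y Vy Oty erefl); rewrite -ps.
exists s, x; split=> //; split=> // cx.
have Vs : nbhs x (V `&` O s) by apply: open_nbhs_nbhs; split; [exact: openI | split].
have [y [[t lt Oty] [Vy Osy]]] := cx _ Vs.
by apply: none_earlier; exists t, y.
Qed.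

End disjointify.

Lemma pi_base_subsetD (X : topologicalType) (U : set (set X)) (Z B : set X) :
  pi_base U -> open Z -> Z !=set0 -> Z `&` (closure B)° = set0 ->
  exists2 Z', U Z' & Z' `<=` Z `\` B.
Proof.
move=> [_ piU] oZ [z Zz] ZB0.
have [||Z' UZ' Z'ZB] := piU (Z `\` closure B).
- by apply: openI => //; exact/closed_openC/closed_closure.
- apply/set0P/eqP; rewrite setD_eq0 => /interiorS.
  rewrite (interior_id _).1 // => ZclB.
  by move: ZB0 => /seteqP[/(_ z) + _]; apply; split=> //; apply: ZclB.
- by exists Z' => // x /Z'ZB [Zx nBx]; split=> // /subset_closure.
Qed.

Section omega_deep.
Variables (X : topologicalType) (U : set (set X)).
Hypothesis U_deep : omega_deep_pi_base U.

Lemma omega_deep_avoid (T : countType) (A : T -> set X) (V : set X) :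
  open V -> V !=set0 -> (forall t, V `&` (closure (A t))° = set0) ->
  exists W, [/\ open W, W !=set0, W `<=` V & forall t, W `&` A t = set0].
Proof.
move=> oV V0 VA; have [[Uopen piU] deep] := U_deep.
pose B n := if unpickle n is Some t then A t else set0.
have VB n : V `&` (closure (B n))° = set0.
  by rewrite /B; case: unpickle => [t|]; rewrite ?VA ?closure0 ?interior0 ?setI0.
pose UV := {Z : set X | U Z /\ Z `<=` V}.
have step n (Z : UV) : {Z' : UV | sval Z' `<=` sval Z `\` B n}.
  apply: cid; case: Z => Z [UZ ZV] /=; have [oZ Z0] := Uopen Z UZ.
  have [|Z' UZ' Z'ZB] := @pi_base_subsetD _ _ Z (B n) U_deep.1 oZ Z0.
    apply/seteqP; split=> // x [Zx Bx].
    by rewrite -(VB n); split=> //; apply: ZV.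
  have Z'V : Z' `<=` V by move=> x /Z'ZB [/ZV].
  by exists (exist _ Z' (conj UZ' Z'V)).
have [Z0 UZ0 Z0V] := piU V oV V0.
pose Zs := fix Zs n : UV :=
  if n is m.+1 then sval (step m (Zs m)) else exist _ Z0 (conj UZ0 Z0V).
have ZsS n : sval (Zs n.+1) `<=` sval (Zs n) `\` B n := svalP (step n (Zs n)).
have [|w Ww] := deep (fun n => sval (Zs n)) (fun n => (svalP (Zs n)).1).
  by move=> n x /ZsS[].
exists (\bigcap_n sval (Zs n))°; split.
- exact: open_interior.
- by exists w.
- by move=> x /interior_subset /(_ 0%N I) /= /Z0V.
- move=> t; apply/seteqP; split=> // x [/interior_subset Wx Ax].
  have /ZsS[_] := Wx (pickle t).+1 I.
  by rewrite /B pickleK.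
Qed.

End omega_deep.

Section sparse_part.
Variables (X : topologicalType) (D : set (X * Qtop)) (a b : rat).

Definition slice_core (s : Qtop) : set X :=
  [set x | a < (s : rat) < b /\ (closure [set y | D (y, s)])° x].

Definition sparse_part : set (X * Qtop) :=
  [set p | D p /\ disjointify slice_core p.2 p.1].

Lemma open_slice_core s : open (slice_core s).
Proof.
rewrite openE => x [abs /nbhs_interior].
by apply: filterS => y Iy; split.
Qed.

Lemma sparse_part_sub : sparse_part `<=` D.
Proof. by move=> p []. Qed.

Lemma nowhere_dense_sparse_part : nowhere_dense sparse_part.
Proof.
apply/seteqP; split=> // p0 Ip0.
have [[x1 s] [[_ Ds] Is]] : sparse_part `&` (closure sparse_part)° !=set0.
  by apply: (interior_subset Ip0); apply: open_nbhs_nbhs; split=> //; exact: open_interior.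
have [P [Q [Px1 Qs PQ]]] := nbhs_prod_box Is.
have [a' [b' [a's sb' ab'Q]]] := @order_nbhs_itvP _ s Q Qs.
have [sq1 q1b'] := @midf_lt _ (s : rat) b' sb'.
set q1 := (_ + _) / 2 in sq1 q1b'.
have Eq1 : closure sparse_part (x1, q1 : Qtop).
  apply: PQ; split; first exact: nbhs_singleton Px1.
  by apply: ab'Q; rewrite /= in_itv /= q1b' (lt_trans a's sq1).
have [|[x2 t] [[_ Dt] [Ds2 stb']]] := Eq1 (disjointify slice_core s `*` `]s, b'[%classic).
  apply: nbhs_setX; last by apply: order_nbhs_itv_oo; rewrite sq1 q1b'.
  by apply: open_nbhs_nbhs; split=> //; exact/open_disjointify/open_slice_core.
move: stb'; rewrite /= in_itv /= => /andP[st _].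
by move: Dt st => /= /disjointify_disj /(_ Ds2) ->; rewrite ltxx.
Qed.

Variables (U : set (set X)).
Hypotheses (U_deep : omega_deep_pi_base U) (D_dense : dense D) (ab : a < b).

Lemma slice_core_meets (V : set X) : open V -> V !=set0 ->
  exists s, V `&` slice_core s !=set0.
Proof.
move=> oV V0; apply: contrapT => /forallNP noneV.
pose A (s : rat) := [set x | a < s < b /\ D (x, s)].
have [|W [oW [w Ww] WV WA]] := omega_deep_avoid U_deep (A := A) oV V0.
  move=> s; apply/seteqP; split=> // x [Vx Ix]; apply: (noneV s); exists x.
  split=> //; have [abs|nabs] := boolP (a < s < b).
    by split=> //; apply: interiorS Ix; apply: closureS => y [].
  suff A0 : A s = set0 by move: Ix; rewrite A0 closure0 interior0.
  by apply/seteqP; split=> // y []; rewrite (negbTE nabs).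
have [||[x s] [[Wx abs] Dxs]] := D_dense (O := W `*` (`]a, b[%classic : set Qtop)).
- have [aab abb] := midf_lt ab.
  by exists (w, (a + b) / 2 : Qtop); split=> //=; rewrite in_itv /= aab abb.
- by apply: open_setX => //; exact: itv_open.
move: abs; rewrite /= in_itv => abs.
by move: (WA s) => /seteqP[/(_ x) + _]; apply.
Qed.

Lemma sparse_part_meets (V : set X) : open V -> V !=set0 ->
  exists x (s : Qtop), [/\ V x, a < (s : rat) < b & sparse_part (x, s)].
Proof.
move=> oV V0; have [s VOs] := slice_core_meets oV V0.
have [t [x [Vx Ox]]] := disjointify_meets open_slice_core oV VOs.
have [abt /interior_subset clx] := disjointify_sub Ox.
have [|y [Dy [Vy Oy]]] := clx (V `&` disjointify slice_core t).
  apply: open_nbhs_nbhs; split=> //.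
  by apply: openI => //; exact/open_disjointify/open_slice_core.
by exists y, t; split.
Qed.

End sparse_part.

Theorem lemma4p2 (X : topologicalType) :
  (exists U : set (set X), omega_deep_pi_base U) ->
  NWD_separable (X * Qtop)%type.
Proof.
move=> [U U_deep] D D_dense.
pose ab n : rat * rat := odflt (0, 0) (unpickle n).
exists (fun n => sparse_part (D n) (ab n).1 (ab n).2); split.
  by move=> n; split; [exact: sparse_part_sub | exact: nowhere_dense_sparse_part].
move=> A [p Ap] oA.
have [P [Q [Pp Qp PQA]]] := nbhs_prod_box (open_nbhs_nbhs (conj oA Ap)).
have [a [b [ap pb abQ]]] := @order_nbhs_itvP _ p.2 Q Qp.
pose n := pickle (a, b).
have abn : ab n = (a, b) by rewrite /ab /n pickleK.
have ab_lt : (ab n).1 < (ab n).2 by rewrite abn; exact: lt_trans ap pb.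
have [x [s [Px abs Es]]] := sparse_part_meets U_deep (D_dense n) ab_lt
  (@open_interior _ P) (ex_intro _ p.1 Pp).
rewrite abn /= in abs Es.
exists (x, s); split; last by exists n => //; rewrite abn.
by apply: PQA; split; [exact: interior_subset | apply: abQ; rewrite /= in_itv].
Qed.
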